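(* Let $\mathfrak g$ be a semisimple Lie algebra over an algebraically closed field of characteristic $0$, $\sigma_1\ne\sigma_2$ commuting involutions of $\mathfrak g$, and $\mathfrak g_{ij}=\{x:\sigma_1(x)=(-1)^ix,\ \sigma_2(x)=(-1)^jx\}$ for $i,j\in\{0,1\}$. Put $\mathfrak m_{ij}=[\mathfrak g_{ij},\mathfrak g_{ij}]\subset\mathfrak g_{00}$ and let $\kappa$ be the Killing form of $\mathfrak g$. Suppose $\mathfrak g_{11}=0$. Then (i) $[\mathfrak m_{01},\mathfrak g_{10}]=[\mathfrak m_{10},\mathfrak g_{01}]=0$; (ii) $\kappa(\mathfrak m_{01},\mathfrak m_{10})=0$ and $\mathfrak m_{01}\cap\mathfrak m_{10}=\{0\}$; (iii) $\mathfrak m_{10}\oplus\mathfrak g_{10}$ and $\mathfrak m_{01}\oplus\mathfrak g_{01}$ are ideals of $\mathfrak g$ with zero intersection.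
   Context: $\mathfrak g=\operatorname{Lie}(G)$ with $G$ connected semisimple; involutions induced from $G$. *)

From HB Require Import structures.
From mathcomp Require Import all_boot all_order all_algebra.
Set Implicit Arguments. Unset Strict Implicit. Unset Printing Implicit Defensive.
Import GRing.Theory.
Local Open Scope ring_scope.

Section Lie.
Variables (K : fieldType) (V : vectType K).

Definition is_lie_bracket (br : V -> V -> V) : Prop :=
  [/\ (forall (a : K) (x y z : V), br (a *: x + y) z = a *: br x z + br y z),
      (forall (a : K) (x y z : V), br x (a *: y + z) = a *: br x y + br x z),
      (forall x : V, br x x = 0) &
      (forall x y z : V, br x (br y z) + br y (br z x) + br z (br x y) = 0)].

Definition lie_brv (br : V -> V -> V) (A B : {vspace V}) : {vspace V} :=
  <<[seq br a b | a <- vbasis A, b <- vbasis B]>>%VS.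

Definition lie_ideal (br : V -> V -> V) (I : {vspace V}) : Prop :=
  forall x y : V, y \in I -> br x y \in I.

Fixpoint derived_series (br : V -> V -> V) (I : {vspace V}) (n : nat) : {vspace V} :=
  if n is n'.+1 then lie_brv br (derived_series br I n') (derived_series br I n')
  else I.

Definition lie_solvable (br : V -> V -> V) (I : {vspace V}) : Prop :=
  exists n, derived_series br I n = 0%VS.

Definition lie_semisimple (br : V -> V -> V) : Prop :=
  forall I : {vspace V}, lie_ideal br I -> lie_solvable br I -> I = 0%VS.

Definition vtrace (f : V -> V) : K :=
  \sum_(i < \dim (fullv : {vspace V}))
     coord (vbasis fullv) i (f (tnth (vbasis fullv) i)).

Definition killing (br : V -> V -> V) (x y : V) : K :=
  vtrace (fun z => br x (br y z)).

Definition lie_involution (br : V -> V -> V) (s : 'End(V)) : Prop :=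
  (forall x y : V, s (br x y) = br (s x) (s y)) /\ (s \o s = \1)%VF.

Definition gij (s1 s2 : 'End(V)) (i j : bool) : {vspace V} :=
  (lker (s1 - ((-1) ^+ i) *: \1%VF) :&: lker (s2 - ((-1) ^+ j) *: \1%VF))%VS.

Definition mij (br : V -> V -> V) (s1 s2 : 'End(V)) (i j : bool) : {vspace V} :=
  lie_brv br (gij s1 s2 i j) (gij s1 s2 i j).

End Lie.

From HB Require Import structures.
From mathcomp Require Import all_boot all_order all_algebra.
Set Implicit Arguments. Unset Strict Implicit. Unset Printing Implicit Defensive.
Import GRing.Theory.
Local Open Scope ring_scope.

(** The eigenprojections of the commuting involutions split [V] as
    [g00 + g10 + g01] (since [g11 = 0]), and the bracket is graded:
    [[g_ij, g_kl] <= g_(i+k)(j+l)].  Hence [g10] and [g01] commute and, by the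
    Jacobi identity, so do the ideals [I10 = m10 + g10] and [I01 = m01 + g01].
    Their intersection is then an abelian ideal, zero by semisimplicity; and
    [ad x \o ad y = 0] for [x] in [m01] and [y] in [m10], because [ad y] maps
    into [I10], which [I01] centralizes. *)

Section LieBracket.
Variables (K : fieldType) (V : vectType K) (br : V -> V -> V).
Hypothesis Hbr : is_lie_bracket br.

Lemma lie_brDl x y z : br (x + y) z = br x z + br y z.
Proof. by case: Hbr => brDZl _ _ _; have := brDZl 1 x y z; rewrite !scale1r. Qed.

Lemma lie_brDr x y z : br z (x + y) = br z x + br z y.
Proof. by case: Hbr => _ brDZr _ _; have := brDZr 1 z x y; rewrite !scale1r. Qed.

Lemma lie_br0l z : br 0 z = 0.
Proof. by apply: (@addrI _ (br 0 z)); rewrite -lie_brDl !addr0. Qed.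

Lemma lie_br0r z : br z 0 = 0.
Proof. by apply: (@addrI _ (br z 0)); rewrite -lie_brDr !addr0. Qed.

Lemma lie_brZl c x z : br (c *: x) z = c *: br x z.
Proof.
by case: Hbr => brDZl _ _ _; have := brDZl c x 0 z; rewrite !addr0 lie_br0l addr0.
Qed.

Lemma lie_brZr c x z : br z (c *: x) = c *: br z x.
Proof.
by case: Hbr => _ brDZr _ _; have := brDZr c z x 0; rewrite !addr0 lie_br0r addr0.
Qed.

Lemma lie_brC x y : br x y = - br y x.
Proof.
case: Hbr => _ _ brxx _; apply/eqP; rewrite -addr_eq0.
by have := brxx (x + y); rewrite lie_brDl !lie_brDr !brxx add0r addr0 => ->.
Qed.

Lemma lie_jacobi x y z : br x (br y z) + br y (br z x) + br z (br x y) = 0.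
Proof. by case: Hbr. Qed.

Lemma lie_brv_ind (P : V -> Prop) (A B : {vspace V}) :
  P 0 -> (forall c x y, P x -> P y -> P (c *: x + y)) ->
  (forall a b, a \in A -> b \in B -> P (br a b)) ->
  forall x, x \in lie_brv br A B -> P x.
Proof.
move=> P0 PZD Pbr x; rewrite /lie_brv; set X := [seq br _ _ | _ <- _, _ <- _].
move=> /(@coord_span _ _ _ (in_tuple X)) ->.
elim/big_rec: _ => // i y _ Py; apply: PZD => //.
have : X`_i \in X by apply: mem_nth; exact: ltn_ord.
by case/allpairsP => -[a b] /= [Aa Bb ->]; apply: Pbr; apply: vbasis_mem.
Qed.

Lemma mem_lie_brv (A B : {vspace V}) a b :
  a \in A -> b \in B -> br a b \in lie_brv br A B.
Proof.
move=> /coord_vbasis -> /coord_vbasis ->.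
elim/big_rec: _ => [|i y _ Hy]; first by rewrite lie_br0l mem0v.
rewrite lie_brDl lie_brZl rpredD // rpredZ //.
elim/big_rec: _ => [|j w _ Hw]; first by rewrite lie_br0r mem0v.
rewrite lie_brDr lie_brZr rpredD // rpredZ //.
apply: memv_span; apply/allpairsP; exists ((vbasis A)`_i, (vbasis B)`_j).
by split => //; apply: mem_nth; rewrite size_tuple.
Qed.

Lemma lie_brv_sub (A B C : {vspace V}) :
  (forall a b, a \in A -> b \in B -> br a b \in C) -> (lie_brv br A B <= C)%VS.
Proof.
move=> brABC; apply/subvP; apply: lie_brv_ind brABC; first exact: mem0v.
by move=> c x y Cx Cy; rewrite rpredD // rpredZ.
Qed.

Definition centralizes (A B : {vspace V}) : Prop :=
  forall a b, a \in A -> b \in B -> br a b = 0.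

Definition normalizes (C A : {vspace V}) : Prop :=
  forall z a, z \in C -> a \in A -> br z a \in A.

Lemma centralizesC (A B : {vspace V}) : centralizes A B -> centralizes B A.
Proof. by move=> cAB b a Bb Aa; rewrite lie_brC cAB ?oppr0. Qed.

Lemma centralizes_addr (A B C : {vspace V}) :
  centralizes C A -> centralizes C B -> centralizes C (A + B).
Proof.
move=> cCA cCB c _ Cc /memv_addP[a Aa [b Bb ->]].
by rewrite lie_brDr cCA ?cCB ?addr0.
Qed.

Lemma centralizes_addl (A B C : {vspace V}) :
  centralizes A C -> centralizes B C -> centralizes (A + B) C.
Proof.
move=> cAC cBC _ c /memv_addP[a Aa [b Bb ->]] Cc.
by rewrite lie_brDl cAC ?cBC ?addr0.
Qed.

Lemma centralizes_lie_brv (A B C : {vspace V}) :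
  centralizes A C -> centralizes B C -> centralizes (lie_brv br A B) C.
Proof.
move=> cAC cBC x c ABx Cc; move: x ABx.
apply: lie_brv_ind => [|k x y xc0 yc0|a b Aa Bb].
- exact: lie_br0l.
- by rewrite lie_brDl lie_brZl xc0 yc0 scaler0 addr0.
have := lie_jacobi a b c.
rewrite (cBC b c) // (centralizesC cAC Cc Aa) !lie_br0r !add0r [in br c _]lie_brC.
by move/eqP; rewrite oppr_eq0 => /eqP.
Qed.

Lemma lie_brv_eq0 (A B : {vspace V}) : centralizes A B -> lie_brv br A B = 0%VS.
Proof.
by move=> cAB; apply/eqP; rewrite -subv0 lie_brv_sub // => a b Aa Bb; rewrite cAB ?mem0v.
Qed.

(* Derivation rule: [z, [a, b]] = [a, [z, b]] + [[z, a], b]. *)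
Lemma normalizes_lie_brv (C A B : {vspace V}) :
  normalizes C A -> normalizes C B -> normalizes C (lie_brv br A B).
Proof.
move=> nCA nCB z x Cz; move: x; apply: lie_brv_ind => [|k x y Px Py|a b Aa Bb].
- by rewrite lie_br0r mem0v.
- by rewrite lie_brDr lie_brZr rpredD // rpredZ.
have := lie_jacobi z a b; move/eqP; rewrite -addrA addr_eq0 => /eqP ->.
rewrite rpredN rpredD //.
- by rewrite [br b z]lie_brC -scaleN1r lie_brZr rpredZ // mem_lie_brv // nCB.
- by rewrite lie_brC rpredN mem_lie_brv // nCA.
Qed.

Lemma lie_idealI (I J : {vspace V}) :
  lie_ideal br I -> lie_ideal br J -> lie_ideal br (I :&: J)%VS.
Proof.
by move=> idI idJ x y; rewrite !memv_cap => /andP[Iy Jy]; rewrite idI ?idJ.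
Qed.

Lemma semisimple_capv_centralizes (I J : {vspace V}) :
  lie_semisimple br -> lie_ideal br I -> lie_ideal br J -> centralizes I J ->
  (I :&: J = 0)%VS.
Proof.
move=> ssV idI idJ cIJ; apply: ssV; first exact: lie_idealI.
exists 1%N; apply: lie_brv_eq0 => a b; rewrite !memv_cap.
by move=> /andP[Ia _] /andP[_ Jb]; exact: cIJ.
Qed.

Lemma killing_eq0 x y : (forall z, br x (br y z) = 0) -> killing br x y = 0.
Proof.
by move=> adxy0; rewrite /killing /vtrace big1 // => i _; rewrite adxy0 linear0.
Qed.

End LieBracket.

Section Grading.
Variables (K : fieldType) (V : vectType K) (br : V -> V -> V) (s1 s2 : 'End(V)).
Hypothesis Hbr : is_lie_bracket br.
Hypotheses (s1_inv : lie_involution br s1) (s2_inv : lie_involution br s2).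
Hypothesis s12C : (s1 \o s2 = s2 \o s1)%VF.
Hypothesis two_neq0 : (2%:R : K) != 0.

Local Notation g := (gij s1 s2).
Local Notation m := (mij br s1 s2).

Lemma mem_gij i j x :
  (x \in g i j) = (s1 x == (-1) ^+ i *: x) && (s2 x == (-1) ^+ j *: x).
Proof.
by rewrite memv_cap !memv_ker !lfunE /= !opp_lfunE !lfunE /= !lfunE /= !subr_eq0.
Qed.

Lemma gij_br i j k l a b :
  a \in g i j -> b \in g k l -> br a b \in g (i (+) k) (j (+) l).
Proof.
rewrite !mem_gij => /andP[/eqP s1a /eqP s2a] /andP[/eqP s1b /eqP s2b].
case: s1_inv s2_inv => s1_br _ [s2_br _].
rewrite s1_br s2_br s1a s2a s1b s2b !(lie_brZl Hbr) !(lie_brZr Hbr) !scalerA.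
by rewrite !signr_addb !eqxx.
Qed.

Lemma mij_sub_g00 i j : (m i j <= g false false)%VS.
Proof. by apply: lie_brv_sub => a b ga gb; have := gij_br ga gb; rewrite !addbb. Qed.

Lemma normalizes_g00_mij i j : normalizes br (g false false) (m i j).
Proof. by apply: normalizes_lie_brv => // z a g00z gija; exact: (gij_br g00z gija). Qed.

Lemma oppv_id_eq0 (x : V) : x = - x -> x = 0.
Proof.
move=> xN; have : (2%:R : K) *: x = 0 by rewrite scaler_nat mulr2n {1}xN addNr.
by move/eqP; rewrite scaler_eq0 (negbTE two_neq0) => /eqP.
Qed.

Lemma capv_gij i j k l : (i, j) != (k, l) -> (g i j :&: g k l = 0)%VS.
Proof.
have sign_eq0 (b c : bool) (x y : V) :
    b != c -> y = (-1) ^+ b *: x -> y = (-1) ^+ c *: x -> x = 0.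
  case: b c => [] [] // _ -> /eqP; rewrite ?expr0 ?expr1 scale1r scaleN1r.
    by rewrite eq_sym => /eqP /oppv_id_eq0.
  by move=> /eqP /oppv_id_eq0.
move=> neq; apply/eqP; rewrite -subv0; apply/subvP => x.
rewrite memv_cap !mem_gij memv0.
move=> /andP[/andP[/eqP s1x /eqP s2x] /andP[/eqP s1x' /eqP s2x']].
move: neq; rewrite xpair_eqE negb_and => /orP[ik | jl]; apply/eqP.
  exact: sign_eq0 ik s1x s1x'.
exact: sign_eq0 jl s2x s2x'.
Qed.

Definition eigen_proj (s : 'End(V)) (b : bool) : 'End(V) :=
  (2%:R^-1 *: (\1 + (-1) ^+ b *: s))%VF.

Lemma eigen_projE (s : 'End(V)) b v :
  eigen_proj s b v = 2%:R^-1 *: (v + (-1) ^+ b *: s v).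
Proof. by rewrite !lfunE /= !lfunE /= !lfunE. Qed.

Lemma eigen_proj_eigen (s : 'End(V)) b v : (s \o s = \1)%VF ->
  s (eigen_proj s b v) = (-1) ^+ b *: eigen_proj s b v.
Proof.
move=> sK; rewrite !eigen_projE linearZ linearD linearZ /= -comp_lfunE sK id_lfunE.
rewrite scalerA mulrC -scalerA; congr (_ *: _).
by rewrite scalerDr scalerA -expr2 sqrr_sign scale1r addrC.
Qed.

Lemma eigen_proj_sum (s : 'End(V)) v : eigen_proj s false v + eigen_proj s true v = v.
Proof.
rewrite !eigen_projE -scalerDr expr0 expr1 scale1r scaleN1r.
by rewrite addrACA subrr addr0 -mulr2n -scaler_nat scalerA mulVf // scale1r.
Qed.

Lemma eigen_proj_gij i j v : eigen_proj s2 j (eigen_proj s1 i v) \in g i j.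
Proof.
case: s1_inv s2_inv => _ s1K [_ s2K].
rewrite mem_gij eigen_proj_eigen // eqxx andbT.
have s1_proj2 u : s1 (eigen_proj s2 j u) = eigen_proj s2 j (s1 u).
  by rewrite !eigen_projE linearZ linearD linearZ /= -!comp_lfunE s12C.
by rewrite s1_proj2 eigen_proj_eigen // linearZ.
Qed.

Lemma memv_gij_decomp v :
  v \in (g false false + g true false + g false true + g true true)%VS.
Proof.
rewrite -[v](eigen_proj_sum s1) -[eigen_proj s1 false v](eigen_proj_sum s2).
rewrite -[eigen_proj s1 true v](eigen_proj_sum s2) addrACA addrA.
by rewrite !memv_add ?eigen_proj_gij.
Qed.

End Grading.

Section VanishingG11.
Variables (K : fieldType) (V : vectType K) (br : V -> V -> V) (s1 s2 : 'End(V)).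
Hypothesis Hbr : is_lie_bracket br.
Hypotheses (s1_inv : lie_involution br s1) (s2_inv : lie_involution br s2).
Hypothesis s12C : (s1 \o s2 = s2 \o s1)%VF.
Hypothesis two_neq0 : (2%:R : K) != 0.
Hypothesis g11_eq0 : gij s1 s2 true true = 0%VS.

(* [gi true = g10], [gi false = g01], and likewise for [mi] and [Ii]. *)
Local Notation g00 := (gij s1 s2 false false).
Local Notation gi i := (gij s1 s2 i (~~ i)).
Local Notation mi i := (mij br s1 s2 i (~~ i)).
Local Notation Ii i := (mi i + gi i)%VS.

Lemma memv_g00_gi v i : v \in (g00 + gi i + gi (~~ i))%VS.
Proof.
have := memv_gij_decomp s1_inv s2_inv s12C two_neq0 v; rewrite g11_eq0 addv0.
by case: i => //; rewrite /= -!addvA (addvC (gij _ _ true false)).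
Qed.

Lemma centralizes_gi i : centralizes br (gi i) (gi (~~ i)).
Proof.
move=> a b gia gib; have := gij_br Hbr s1_inv s2_inv gia gib.
by rewrite negbK addbN addNb addbb g11_eq0 memv0 => /eqP.
Qed.

Lemma centralizes_mi_gi i : centralizes br (mi i) (gi (~~ i)).
Proof. by apply: centralizes_lie_brv => //; exact: centralizes_gi. Qed.

Lemma centralizes_gi_mi i : centralizes br (gi i) (mi (~~ i)).
Proof.
by apply: centralizesC => //; have := centralizes_mi_gi (i := ~~ i); rewrite negbK.
Qed.

Lemma centralizes_Ii i : centralizes br (Ii i) (Ii (~~ i)).
Proof.
apply: centralizes_addl => //; apply: centralizes_addr => //.
- by apply: centralizes_lie_brv => //; exact: centralizes_gi_mi.
- exact: centralizes_mi_gi.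
- exact: centralizes_gi_mi.
- exact: centralizes_gi.
Qed.

Lemma lie_ideal_Ii i : lie_ideal br (Ii i).
Proof.
move=> z _ /memv_addP[u miu [w giw ->]].
have /memv_addP[_ /memv_addP[a g00a [b gib ->]] [c gic ->]] := memv_g00_gi z i.
have g00u : u \in g00 by apply: subvP (mij_sub_g00 Hbr s1_inv s2_inv i (~~ i)) _ miu.
rewrite !(lie_brDl Hbr) !(lie_brDr Hbr) !rpredD //.
- by apply: subvP (addvSl _ _) _ _; exact: normalizes_g00_mij.
- by apply: subvP (addvSr _ _) _ _; exact: (gij_br Hbr s1_inv s2_inv g00a giw).
- apply: subvP (addvSr _ _) _ _.
  by have := gij_br Hbr s1_inv s2_inv gib g00u; rewrite !addbF.
- by apply: subvP (addvSl _ _) _ _; exact: mem_lie_brv.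
- by rewrite (centralizesC Hbr (centralizes_mi_gi (i := i))) // mem0v.
- by rewrite (centralizesC Hbr (centralizes_gi (i := i))) // mem0v.
Qed.

Lemma directv_mi_gi i : directv (mi i + gi i).
Proof.
have g00_gi : (false, false) != (i, ~~ i) by case: i.
apply/directv_addP/eqP; rewrite -subv0 -(capv_gij s1 s2 two_neq0 g00_gi).
by rewrite capvS // (mij_sub_g00 Hbr s1_inv s2_inv).
Qed.

Lemma killing_m01_m10 x y :
  x \in mi false -> y \in mi true -> killing br x y = 0.
Proof.
move=> mix miy; apply: killing_eq0 => z.
apply: (centralizes_Ii (i := false)); first exact: subvP (addvSl _ _) _ mix.
by rewrite (lie_brC Hbr) rpredN lie_ideal_Ii // (subvP (addvSl _ _)).
Qed.

Hypothesis g_semisimple : lie_semisimple br.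

Lemma capv_Ii : (Ii true :&: Ii false = 0)%VS.
Proof.
apply: (semisimple_capv_centralizes g_semisimple); try exact: lie_ideal_Ii.
exact: (centralizes_Ii (i := true)).
Qed.

Lemma capv_mi : (mi false :&: mi true = 0)%VS.
Proof. by apply/eqP; rewrite -subv0 -capv_Ii capvC capvS // addvSl. Qed.

End VanishingG11.

Theorem lemma3p1 (K : closedFieldType) (V : vectType K)
  (br : V -> V -> V) (s1 s2 : 'End(V)) :
  [pchar K] =i pred0 ->
  is_lie_bracket br ->
  lie_semisimple br ->
  lie_involution br s1 -> lie_involution br s2 ->
  s1 != s2 ->
  (s1 \o s2 = s2 \o s1)%VF ->
  gij s1 s2 true true = 0%VS ->
  (* (i) *)
  (lie_brv br (mij br s1 s2 false true) (gij s1 s2 true false) = 0%VS /\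
   lie_brv br (mij br s1 s2 true false) (gij s1 s2 false true) = 0%VS) /\
  (* (ii) *)
  ((forall x y : V, x \in mij br s1 s2 false true -> y \in mij br s1 s2 true false ->
      killing br x y = 0) /\
   (mij br s1 s2 false true :&: mij br s1 s2 true false = 0)%VS) /\
  (* (iii) *)
  [/\ directv (mij br s1 s2 true false + gij s1 s2 true false),
      directv (mij br s1 s2 false true + gij s1 s2 false true),
      lie_ideal br (mij br s1 s2 true false + gij s1 s2 true false)%VS,
      lie_ideal br (mij br s1 s2 false true + gij s1 s2 false true)%VS &
      ((mij br s1 s2 true false + gij s1 s2 true false) :&:
       (mij br s1 s2 false true + gij s1 s2 false true) = 0)%VS].
Proof.
move=> char0 Hbr ss s1_inv s2_inv _ s12C g11_eq0.
have two_neq0 : (2%:R : K) != 0 by apply/negP => two0; have := char0 2; rewrite !inE two0.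
split; [split | split; [split | split]].
- exact: lie_brv_eq0 (centralizes_mi_gi Hbr s1_inv s2_inv g11_eq0 (i := false)).
- exact: lie_brv_eq0 (centralizes_mi_gi Hbr s1_inv s2_inv g11_eq0 (i := true)).
- exact: killing_m01_m10 Hbr s1_inv s2_inv s12C two_neq0 g11_eq0.
- exact: capv_mi Hbr s1_inv s2_inv s12C two_neq0 g11_eq0 ss.
- exact: (directv_mi_gi Hbr s1_inv s2_inv two_neq0 true).
- exact: (directv_mi_gi Hbr s1_inv s2_inv two_neq0 false).
- exact: (lie_ideal_Ii Hbr s1_inv s2_inv s12C two_neq0 g11_eq0 (i := true)).
- exact: (lie_ideal_Ii Hbr s1_inv s2_inv s12C two_neq0 g11_eq0 (i := false)).
- exact: capv_Ii Hbr s1_inv s2_inv s12C two_neq0 g11_eq0 ss.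
Qed.
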